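(* Every H\''older set $X\subseteq\mathbb{R}^d$ is simple, i.e. each $x\in X$ has a basis of neighborhoods $\mathscr U$ such that $U\cap\mathrm{int}(X)$ is connected for all $U\in\mathscr U$.
   Context: For $0<\alpha\le1$, $r,h>0$ let $\Gamma^\alpha_d(r,h)=\{(x',x_d)\in\mathbb{R}^{d-1}\times\mathbb{R}: |x'|<r,\ h(|x'|/r)^\alpha<x_d<h\}$. An open $U$ has the uniform cusp property of index $\alpha$ if for every $x\in\partial U$ there are $\epsilon>0$, some $\Gamma=\Gamma^\alpha_d(r,h)$ and $A\in O(d)$ with $y+A\Gamma\subseteq U$ for all $y\in\overline U\cap B(x,\epsilon)$. A H\''older set is a closed set $X$ with $X=\overline{\mathrm{int}(X)}\ne\emptyset$ such that $\mathrm{int}(X)$ has the uniform cusp property of some index $\alpha\in(0,1]$. *)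

(* Points of R^d are row vectors 'rV[R]_d with
   d = n.+1 (so d >= 1); the last coordinate (index ord_max) is x_d and the
   first n coordinates form x'. *)
From HB Require Import structures.
From mathcomp Require Import all_boot all_order all_algebra.
From mathcomp Require Import all_classical all_reals all_analysis.
Set Implicit Arguments. Unset Strict Implicit. Unset Printing Implicit Defensive.
Import Order.TTheory GRing.Theory Num.Theory.
Import numFieldNormedType.Exports.
Local Open Scope classical_set_scope.
Local Open Scope ring_scope.

Definition enorm (R : realType) (k : nat) (x : 'rV[R]_k) : R :=
  Num.sqrt (\sum_(i < k) x ord0 i ^+ 2).

Definition eball (R : realType) (k : nat) (x : 'rV[R]_k) (eps : R) : set 'rV[R]_k :=
  [set y | enorm (y - x) < eps].

Definition xprime (R : realType) (n : nat) (x : 'rV[R]_n.+1) : 'rV[R]_n :=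
  \row_(i < n) x ord0 (widen_ord (leqnSn n) i).

Definition xlast (R : realType) (n : nat) (x : 'rV[R]_n.+1) : R := x ord0 ord_max.

Definition cusp (R : realType) (n : nat) (alpha r h : R) : set 'rV[R]_n.+1 :=
  [set x | enorm (xprime x) < r /\
           h * (enorm (xprime x) / r) `^ alpha < xlast x /\ xlast x < h].

Definition orthogonal_mx (R : realType) (k : nat) (A : 'M[R]_k) : Prop :=
  A^T *m A = 1%:M.

(* A acting on (row) vector z : the usual A z, written z *m A^T *)
Definition act_mx (R : realType) (k : nat) (A : 'M[R]_k) (z : 'rV[R]_k) : 'rV[R]_k :=
  z *m A^T.

Definition boundary (R : realType) (k : nat) (U : set 'rV[R]_k) : set 'rV[R]_k :=
  closure U `\` interior U.

Definition uniform_cusp_property (R : realType) (n : nat) (alpha : R)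
    (U : set 'rV[R]_n.+1) : Prop :=
  forall x, boundary U x ->
    exists eps r h : R, [/\ 0 < eps, 0 < r & 0 < h] /\
    exists A : 'M[R]_n.+1, orthogonal_mx A /\
      forall y, (closure U `&` eball x eps) y ->
        [set y + act_mx A z | z in @cusp R n alpha r h] `<=` U.

Definition holder_set (R : realType) (n : nat) (X : set 'rV[R]_n.+1) : Prop :=
  [/\ closed X, X = closure (interior X), X != set0 &
      exists alpha : R, 0 < alpha <= 1 /\ @uniform_cusp_property R n alpha (interior X)].

Definition simple_set (R : realType) (k : nat) (X : set 'rV[R]_k) : Prop :=
  forall x, X x ->
    exists B : set (set 'rV[R]_k),
      [/\ (forall U, B U -> nbhs x U),
          (forall W, nbhs x W -> exists2 U, B U & U `<=` W) &
          (forall U, B U -> connected (U `&` interior X))].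

(* At an interior point, small balls do the job, since balls are connected.  At a
   boundary point x, the uniform cusp property gives a rotation A and a cusp Gamma with
   y + A Gamma inside int X for every y of cl(int X) near x.  In the frame (x, A) take the
   cylinder C = x + A {w | |w'| < d, -d < w_d <= t}, with t small and d so small that the
   disc of radius d at height t lies in Gamma.  Every point p = x + A w of C /\ int X is
   joined to the centre x + A (t e_d) inside C /\ int X: first straight up to height t,
   within p + A Gamma, then horizontally to the axis, within x + A Gamma.  These cylinders
   form a neighbourhood basis of x. *)

From HB Require Import structures.
From mathcomp Require Import all_boot all_order all_algebra.
From mathcomp Require Import all_classical all_reals all_analysis.
From mathcomp Require Import ring lra.
Import Order.TTheory GRing.Theory Num.Theory.
Import numFieldNormedType.Exports.
Local Open Scope classical_set_scope.
Local Open Scope ring_scope.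
Set Implicit Arguments. Unset Strict Implicit. Unset Printing Implicit Defensive.

Lemma star_connected (T : topologicalType) (S : set T) (c : T) :
  (forall p, S p -> exists K, [/\ connected K, K `<=` S, K p & K c]) ->
  connected S.
Proof.
move=> star.
have /choice[K HK] : forall p, exists K : set T,
    S p -> [/\ connected K, K `<=` S, K p & K c].
  move=> p; have [/star[K HK]|nSp] := pselect (S p); first by exists K.
  by exists set0 => /nSp.
have -> : S = \bigcup_(p in S) K p.
  apply/seteqP; split => [p Sp|p [q Sq]]; first by exists p => //; case: (HK p Sp).
  by case: (HK q Sq) => _ + _ _; apply.
apply: bigcup_connected; first by exists c => p /HK[].
by move=> p /HK[].
Qed.

Section Segment.
Variables (R : realType) (V : normedModType R).

Definition seg (a v : V) : set V := [set a + l *: v | l in `[0, 1]].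

Lemma seg_connected (a v : V) : connected (seg a v).
Proof.
apply: connected_continuous_connected; first exact: segment_connected.
apply: continuous_subspaceT => l.
apply: (@continuousD _ _ _ (fun=> a) (fun l : R => l *: v)).
  exact: cst_continuous.
exact: continuousZr_tmp.
Qed.

Lemma seg_start (a v : V) : seg a v a.
Proof. by exists 0; [rewrite /= in_itv /= lexx ler01 | rewrite scale0r addr0]. Qed.

Lemma seg_end (a v : V) : seg a v (a + v).
Proof. by exists 1; [rewrite /= in_itv /= lexx ler01 | rewrite scale1r]. Qed.

Lemma ball_connected (x : V) (e : R) : connected (ball x e).
Proof.
apply: (@star_connected _ _ x) => p bp; exists (seg p (x - p)); split.
- exact: seg_connected.
- move=> z [l]; rewrite /= in_itv /= => /andP[l0 l1] <-.
  move: bp; rewrite -!ball_normE /ball_ /=.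
  have -> : x - (p + l *: (x - p)) = (1 - l) *: (x - p).
    by rewrite scalerBl scale1r opprD addrA.
  rewrite normrZ ger0_norm ?subr_ge0 //; apply: le_lt_trans.
  by rewrite ler_piMl ?normr_ge0 // gerBl.
- exact: seg_start.
- by have := seg_end p (x - p); rewrite addrCA subrr addr0.
Qed.

End Segment.

Section EuclideanNorm.
Variable R : realType.

Lemma enorm_ge0 k (v : 'rV[R]_k) : 0 <= enorm v.
Proof. exact: sqrtr_ge0. Qed.

Lemma enorm0 k : enorm (0 : 'rV[R]_k) = 0.
Proof. by rewrite /enorm big1 ?sqrtr0 // => i _; rewrite mxE expr0n. Qed.

Lemma enormZ k (l : R) (v : 'rV[R]_k) : enorm (l *: v) = `|l| * enorm v.
Proof.
rewrite /enorm -sqrtr_sqr -sqrtrM ?sqr_ge0 // mulr_sumr.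
by congr Num.sqrt; apply: eq_bigr => i _; rewrite mxE exprMn.
Qed.

Lemma coord_le_enorm k (v : 'rV[R]_k) j : `|v ord0 j| <= enorm v.
Proof.
rewrite /enorm -sqrtr_sqr ler_wsqrtr // (bigD1 j) //= lerDl.
by apply: sumr_ge0 => i _; exact: sqr_ge0.
Qed.

Lemma enorm_le_sup k (v : 'rV[R]_k) (M : R) : 0 <= M ->
  (forall j, `|v ord0 j| <= M) -> enorm v <= k%:R * M.
Proof.
move=> M0 vM; rewrite /enorm -(@ger0_norm _ (k%:R * M)) ?mulr_ge0 // -sqrtr_sqr.
apply: ler_wsqrtr; apply: (@le_trans _ _ (\sum_(i < k) M ^+ 2)).
  by apply: ler_sum => i _; rewrite -real_normK ?num_real // lerXn2r ?nnegrE.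
rewrite sumr_const card_ord -[_ *+ k]mulr_natr exprMn [X in _ <= X]mulrC.
apply: ler_wpM2l; first exact: sqr_ge0.
case: k {v vM} => [|k]; first by rewrite expr0n.
by rewrite expr2 -natrM ler_nat leq_pmull.
Qed.

Lemma enorm_sqr_split n (w : 'rV[R]_n.+1) :
  enorm w ^+ 2 = enorm (xprime w) ^+ 2 + xlast w ^+ 2.
Proof.
rewrite /enorm !sqr_sqrtr ?sumr_ge0 // => [|i _|i _]; try exact: sqr_ge0.
by rewrite big_ord_recr; congr (_ + _); apply: eq_bigr => i _; rewrite mxE.
Qed.

Lemma enorm_xprime_le n (w : 'rV[R]_n.+1) : enorm (xprime w) <= enorm w.
Proof.
rewrite -ler_sqr ?nnegrE ?enorm_ge0 // enorm_sqr_split lerDl.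
exact: sqr_ge0.
Qed.

Lemma enorm_le_split n (w : 'rV[R]_n.+1) :
  enorm w <= enorm (xprime w) + `|xlast w|.
Proof.
rewrite -ler_sqr ?nnegrE ?addr_ge0 ?enorm_ge0 ?normr_ge0 //.
rewrite enorm_sqr_split sqrrD real_normK ?num_real // lerD2r lerDl.
by rewrite mulrn_wge0 ?mulr_ge0 ?enorm_ge0.
Qed.

Lemma enorm_act_mx k (A : 'M[R]_k) (v : 'rV[R]_k) :
  orthogonal_mx A -> enorm (act_mx A v) = enorm v.
Proof.
have sum_sqr (u : 'rV[R]_k) : \sum_(i < k) u ord0 i ^+ 2 = (u *m u^T) ord0 ord0.
  by rewrite !mxE; apply: eq_bigr => i _; rewrite mxE expr2.
move=> A_orth; rewrite /enorm /act_mx !sum_sqr.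
by rewrite trmx_mul trmxK -mulmxA (mulmxA A^T) A_orth mul1mx.
Qed.

End EuclideanNorm.

Section Coordinates.
Variables (R : realType) (n : nat).
Local Notation e_d := (delta_mx ord0 ord_max : 'rV[R]_n.+1).

Implicit Types (u w : 'rV[R]_n.+1) (l : R).

Lemma xprimeD u w : xprime (u + w) = xprime u + xprime w.
Proof. by apply/rowP => i; rewrite !mxE. Qed.

Lemma xprimeZ l w : xprime (l *: w) = l *: xprime w.
Proof. by apply/rowP => i; rewrite !mxE. Qed.

Lemma xlastD u w : xlast (u + w) = xlast u + xlast w.
Proof. by rewrite /xlast mxE. Qed.

Lemma xlastZ l w : xlast (l *: w) = l * xlast w.
Proof. by rewrite /xlast mxE. Qed.

Lemma xprime_axis l : xprime (l *: e_d) = 0.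
Proof.
apply/rowP => i; have /negbTE i_max : widen_ord (leqnSn n) i != ord_max.
  by rewrite -val_eqE /= neq_ltn ltn_ord.
by rewrite !mxE i_max andbF mulr0.
Qed.

Lemma xlast_axis l : xlast (l *: e_d) = l.
Proof. by rewrite /xlast !mxE !eqxx mulr1. Qed.

Definition hproj w := w - xlast w *: e_d.

Lemma xprime_hproj w : xprime (hproj w) = xprime w.
Proof. by rewrite /hproj -scaleNr xprimeD xprime_axis addr0. Qed.

Lemma xlast_hproj w : xlast (hproj w) = 0.
Proof. by rewrite /hproj -scaleNr xlastD xlast_axis subrr. Qed.

End Coordinates.

Section ActMx.
Variables (R : realType) (k : nat) (A : 'M[R]_k).

Fact act_mx_is_linear : linear (act_mx A).
Proof. by move=> l u v; rewrite /act_mx mulmxDl scalemxAl. Qed.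
HB.instance Definition _ := GRing.isLinear.Build R _ _ _ (act_mx A) act_mx_is_linear.

Lemma act_mxK : orthogonal_mx A -> cancel (mulmx^~ A) (act_mx A).
Proof. by move=> A_orth v; rewrite /act_mx -mulmxA (mulmx1C A_orth) mulmx1. Qed.

End ActMx.

Section Cusp.
Variables (R : realType) (n : nat) (alpha r h : R).
Hypotheses (alpha_gt0 : 0 < alpha) (r_gt0 : 0 < r) (h_gt0 : 0 < h).
Local Notation e_d := (delta_mx ord0 ord_max : 'rV[R]_n.+1).

Lemma cusp_at_height (z : 'rV[R]_n.+1) (d : R) :
  enorm (xprime z) <= d -> d < r -> h * (d / r) `^ alpha < xlast z < h ->
  cusp alpha r h z.
Proof.
move=> zd dr /andP[low high]; have d_ge0 := le_trans (enorm_ge0 _) zd.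
split; [exact: le_lt_trans zd dr | split=> //].
apply: le_lt_trans low; rewrite ler_pM2l //.
have r_ge0 := ltW r_gt0.
apply: (ge0_ler_powR (ltW alpha_gt0)); rewrite ?nnegrE ?divr_ge0 ?enorm_ge0 //.
by rewrite ler_pM2r ?invr_gt0.
Qed.

Lemma cusp_axis (s : R) : 0 < s < h -> cusp alpha r h (s *: e_d).
Proof.
rewrite /cusp /= xprime_axis xlast_axis enorm0 mul0r.
by rewrite powR0 ?gt_eqF // mulr0 => /andP[].
Qed.

Lemma cusp_width (t : R) : 0 < t ->
  exists d, [/\ 0 < d, d <= t, d < r & h * (d / r) `^ alpha < t].
Proof.
move=> t_gt0; set m := (t / (2 * h)) `^ alpha^-1.
have m_gt0 : 0 < m by rewrite powR_gt0 // divr_gt0 // mulr_gt0.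
have m_alpha : m `^ alpha = t / (2 * h).
  by rewrite -powRrM mulVf ?gt_eqF // powRr1 // divr_ge0 ?mulr_ge0 // ltW.
set d := Num.min t (Num.min (r / 2) (r * m)).
have d_gt0 : 0 < d by rewrite !lt_min t_gt0 divr_gt0 ?mulr_gt0.
exists d; split => //.
- by rewrite ge_min lexx.
(* [lra] does not see section hypotheses, hence the [have := r_gt0]. *)
- by have := r_gt0; rewrite !gt_min => ?; apply/orP; right; apply/orP; left; lra.
apply: (@le_lt_trans _ _ (h * m `^ alpha)).
  rewrite ler_pM2l //; apply: (ge0_ler_powR (ltW alpha_gt0)).
  - by rewrite nnegrE divr_ge0 // ltW.
  - by rewrite nnegrE ltW.
  - by rewrite ler_pdivrMr // mulrC !ge_min lexx !orbT.
have -> : h * m `^ alpha = t / 2 by rewrite m_alpha; field; rewrite gt_eqF.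
by have := t_gt0; lra.
Qed.

End Cusp.

Section StandardCylinder.
Variables (R : realType) (n : nat).
Local Notation e_d := (delta_mx ord0 ord_max : 'rV[R]_n.+1).

Definition cyl (d t : R) : set 'rV[R]_n.+1 :=
  [set w | [/\ enorm (xprime w) < d, - d < xlast w & xlast w <= t]].

Lemma cyl_enorm_lt d t w : d <= t -> cyl d t w -> enorm w < 2 * t.
Proof.
move=> dt [wd dw wt]; apply: le_lt_trans (enorm_le_split w) _.
have : `|xlast w| <= t by rewrite ler_norml wt andbT; lra.
lra.
Qed.

Lemma cyl_lift d t w u : cyl d t w -> 0 <= u <= t - xlast w ->
  cyl d t (w + u *: e_d).
Proof.
move=> [wd dw wt] /andP[u0 ut].
by rewrite /cyl /= xprimeD xlastD xprime_axis xlast_axis addr0; split=> //; lra.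
Qed.

Lemma cyl_top d t w l : 0 < d -> 0 < t -> cyl d t w -> 0 <= l <= 1 ->
  cyl d t (t *: e_d + l *: hproj w).
Proof.
move=> d_gt0 t_gt0 [wd _ _] /andP[l0 l1].
rewrite /cyl /= xprimeD xlastD xprime_axis xlast_axis xprimeZ xlastZ.
rewrite xprime_hproj xlast_hproj mulr0 add0r addr0 enormZ ger0_norm //.
split=> //; last by lra.
by apply: le_lt_trans wd; rewrite ler_piMl ?enorm_ge0.
Qed.

End StandardCylinder.

Lemma mx_ballP (R : numFieldType) m k (x y : 'M[R]_(m, k)) (e : R) :
  ball x e y <-> 0 < e /\ forall i j, `|x i j - y i j| < e.
Proof. by split=> -[e_gt0 xy]; split=> // i j; move: (xy i j). Qed.

Section Cylinder.
Variables (R : realType) (n : nat) (x : 'rV[R]_n.+1) (A : 'M[R]_n.+1).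
Hypothesis A_orth : orthogonal_mx A.

Definition cylinder (d t : R) : set 'rV[R]_n.+1 :=
  [set x + act_mx A w | w in cyl d t].

Lemma cylinder_nbhs d t : 0 < d -> 0 < t -> nbhs x (cylinder d t).
Proof.
move=> d_gt0 t_gt0; set m := Num.min d t.
have m_gt0 : 0 < m by rewrite lt_min d_gt0.
have md : m <= d by rewrite ge_min lexx.
have mt : m <= t by rewrite ge_min lexx orbT.
apply/nbhs_ballP; exists (m / (2 * n.+1%:R)); first by rewrite /= divr_gt0 ?mulr_gt0.
move=> p /mx_ballP[_ xp]; set w := (p - x) *m A.
exists w; last by rewrite act_mxK // addrC subrK.
have w_small : enorm w <= m / 2.
  rewrite -(enorm_act_mx _ A_orth) act_mxK //.
  have -> : m / 2 = n.+1%:R * (m / (2 * n.+1%:R)) by field.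
  apply: enorm_le_sup => [|j]; first by rewrite divr_ge0 ?mulr_ge0 ?ltW.
  by rewrite !mxE distrC ltW.
have w'_small := le_trans (enorm_xprime_le w) w_small.
have := le_trans (coord_le_enorm w ord_max) w_small.
by rewrite -/(xlast w) ler_norml => /andP[lo hi]; split; lra.
Qed.

Lemma cylinder_enorm_lt d t p : d <= t -> cylinder d t p -> enorm (p - x) < 2 * t.
Proof.
by move=> dt [w cw <-]; rewrite addrC addKr enorm_act_mx //; exact: cyl_enorm_lt cw.
Qed.

Lemma cylinder_sub_ball d t : d <= t -> cylinder d t `<=` ball x (2 * t).
Proof.
move=> dt p /(cylinder_enorm_lt dt) px; apply/mx_ballP; split.
  exact: le_lt_trans (enorm_ge0 _) px.
move=> i j; rewrite (ord1 i) distrC; apply: le_lt_trans px.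
by have := coord_le_enorm (p - x) j; rewrite !mxE.
Qed.

Lemma seg_frame_sub a b (P : set 'rV[R]_n.+1) :
  (forall l, 0 <= l <= 1 -> P (x + act_mx A (a + l *: b))) ->
  seg (x + act_mx A a) (act_mx A b) `<=` P.
Proof.
move=> Pab q [l]; rewrite /= in_itv /= => /Pab + <-.
by rewrite linearD linearZ addrA.
Qed.

End Cylinder.

Section CylinderTrace.
Variables (R : realType) (n : nat) (x : 'rV[R]_n.+1) (A : 'M[R]_n.+1).
Variables (U : set 'rV[R]_n.+1) (alpha r h eps d t : R).
Hypotheses (A_orth : orthogonal_mx A) (alpha_gt0 : 0 < alpha) (r_gt0 : 0 < r).
Hypotheses (d_gt0 : 0 < d) (d_le_t : d <= t) (d_lt_r : d < r).
Hypotheses (cusp_at_t : h * (d / r) `^ alpha < t) (t_lt_h : 2 * t < h).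
Hypothesis t_le_eps : 2 * t <= eps.
Hypothesis x_adh : closure U x.
Hypothesis cusp_near_x : forall y, (closure U `&` eball x eps) y ->
  [set y + act_mx A z | z in cusp alpha r h] `<=` U.
Local Notation e_d := (delta_mx ord0 ord_max : 'rV[R]_n.+1).
Local Notation C := (cylinder x A d t).

Let t_gt0 : 0 < t. Proof. exact: lt_le_trans d_le_t. Qed.
Let h_gt0 : 0 < h. Proof. by have := t_gt0; have := t_lt_h; lra. Qed.

Lemma cylinder_vertical_seg w : cyl d t w -> U (x + act_mx A w) ->
  seg (x + act_mx A w) (act_mx A ((t - xlast w) *: e_d)) `<=` C `&` U.
Proof.
move=> cw Uw; have [_ dw wt] := cw; set s := t - xlast w.
have s_lt_h : s < h by have := t_lt_h; have := d_le_t; rewrite /s; lra.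
apply: seg_frame_sub => l /andP[l0 l1]; rewrite scalerA.
have ls_ge0 : 0 <= l * s by rewrite mulr_ge0 // subr_ge0.
have ls_le_s : l * s <= s by rewrite ler_piMl // subr_ge0.
split; first by exists (w + (l * s) *: e_d) => //; apply: cyl_lift; rewrite ?ls_ge0.
have [->|ls_neq0] := eqVneq (l * s) 0; first by rewrite scale0r addr0.
rewrite linearD addrA; apply: (cusp_near_x (y := x + act_mx A w)).
  split; first exact: subset_closure.
  rewrite /eball /= addrC addKr enorm_act_mx //.
  exact: lt_le_trans (cyl_enorm_lt d_le_t cw) t_le_eps.
exists ((l * s) *: e_d) => //; apply: cusp_axis => //.
by rewrite lt_neqAle eq_sym ls_neq0 ls_ge0 /=; apply: le_lt_trans s_lt_h.
Qed.

Lemma cylinder_horizontal_seg w : cyl d t w ->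
  seg (x + act_mx A (t *: e_d)) (act_mx A (hproj w)) `<=` C `&` U.
Proof.
move=> cw; apply: seg_frame_sub => l l01.
have cz := cyl_top d_gt0 t_gt0 cw l01.
split; first by exists (t *: e_d + l *: hproj w).
apply: (cusp_near_x (y := x)).
  split=> //; rewrite /eball /= subrr enorm0.
  by apply: lt_le_trans t_le_eps; rewrite mulr_gt0.
exists (t *: e_d + l *: hproj w) => //; have [zd _ _] := cz.
apply: (cusp_at_height alpha_gt0 r_gt0 h_gt0 (ltW zd) d_lt_r).
rewrite xlastD xlast_axis xlastZ xlast_hproj mulr0 addr0 cusp_at_t /=.
by have := t_lt_h; have := t_gt0; lra.
Qed.

Lemma cylinder_trace_connected : connected (C `&` U).
Proof.
apply: (@star_connected _ _ (x + act_mx A (t *: e_d))) => _ [[w cw <-] Uw].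
exists (seg (x + act_mx A w) (act_mx A ((t - xlast w) *: e_d)) `|`
        seg (x + act_mx A (t *: e_d)) (act_mx A (hproj w))); split.
- apply: connectedU; try exact: seg_connected.
  exists (x + act_mx A (t *: e_d + hproj w)); split; last first.
    by rewrite [act_mx A (t *: e_d + _)]linearD addrA; exact: seg_end.
  have -> : t *: e_d + hproj w = w + (t - xlast w) *: e_d.
    by rewrite /hproj scalerBl addrCA addrA.
  by rewrite linearD addrA; exact: seg_end.
- by move=> q [/cylinder_vertical_seg|/cylinder_horizontal_seg]; apply.
- by left; exact: seg_start.
- by right; exact: seg_start.
Qed.

End CylinderTrace.

Definition connected_trace_basis (T : topologicalType) (U : set T) (x : T) :=
  exists B : set (set T),
    [/\ (forall V, B V -> nbhs x V),
        (forall W, nbhs x W -> exists2 V, B V & V `<=` W) &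
        (forall V, B V -> connected (V `&` U))].

Lemma connected_trace_basis_of_small (T : topologicalType) (U : set T) (x : T) :
  (forall W, nbhs x W -> exists V, [/\ nbhs x V, V `<=` W & connected (V `&` U)]) ->
  connected_trace_basis U x.
Proof.
move=> small; exists [set V | nbhs x V /\ connected (V `&` U)].
split=> [V []//|W /small[V [xV VW VU]]|V []//].
by exists V.
Qed.

Lemma open_connected_trace_basis (R : realType) (T : normedModType R) (U : set T) x :
  open U -> U x -> connected_trace_basis U x.
Proof.
move=> oU Ux; apply: connected_trace_basis_of_small => W xW.
have /nbhs_ballP[e e_gt0 eWU] : nbhs x (W `&` U).
  by apply: filterI => //; exact: open_nbhs_nbhs.
exists (ball x e); split; first exact: nbhsx_ballx.
  by move=> y /eWU[].
by rewrite setIidl; [exact: ball_connected | move=> y /eWU[]].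
Qed.

Lemma cusp_connected_trace_basis (R : realType) n (U : set 'rV[R]_n.+1) x
    (A : 'M[R]_n.+1) (alpha r h eps : R) :
  orthogonal_mx A -> 0 < alpha -> 0 < r -> 0 < h -> 0 < eps -> closure U x ->
  (forall y, (closure U `&` eball x eps) y ->
     [set y + act_mx A z | z in cusp alpha r h] `<=` U) ->
  connected_trace_basis U x.
Proof.
move=> A_orth alpha_gt0 r_gt0 h_gt0 eps_gt0 x_adh cusp_near_x.
apply: connected_trace_basis_of_small => W /nbhs_ballP[rho rho_gt0 xW].
set t := Num.min rho (Num.min eps h) / 4.
have t_gt0 : 0 < t by rewrite divr_gt0 // !lt_min rho_gt0 eps_gt0.
have t4 : 4 * t = Num.min rho (Num.min eps h) by rewrite /t mulrC divfK.
have t_rho : 4 * t <= rho by rewrite t4 ge_min lexx.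
have t_eps : 4 * t <= eps by rewrite t4 !ge_min lexx orbT.
have t_h : 4 * t <= h by rewrite t4 !ge_min lexx !orbT.
have [d [d_gt0 d_le_t d_lt_r cusp_at_t]] := cusp_width alpha_gt0 r_gt0 h_gt0 t_gt0.
exists (cylinder x A d t); split.
- exact: cylinder_nbhs.
- move=> p /(cylinder_sub_ball A_orth d_le_t) p_near; apply: xW.
  by apply: le_ball p_near; lra.
- by apply: cylinder_trace_connected cusp_near_x => //; lra.
Qed.

Theorem proposition3p9 (R : realType) (n : nat) (X : set 'rV[R]_n.+1) :
  holder_set X -> simple_set X.
Proof.
move=> [_ X_int _ [alpha [/andP[alpha_gt0 _] X_cusp]]] x Xx.
have [x_int|x_not_int] := pselect (interior X x).
  exact: open_connected_trace_basis (@open_interior _ X) x_int.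
have x_bd : boundary (interior X) x.
  by split; [rewrite -X_int | rewrite (interior_id _).1 //; exact: open_interior].
have [eps [r [h [[eps_gt0 r_gt0 h_gt0] [A [A_orth cusp_near_x]]]]]] := X_cusp x x_bd.
exact: cusp_connected_trace_basis A_orth alpha_gt0 r_gt0 h_gt0 eps_gt0 x_bd.1 cusp_near_x.
Qed.
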